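(* For all complex $y$, $$\sum_{n=0}^{\infty}\binom{2n}{n}\frac{1}{2^n}R_n(y)=e^{y}\sum_{n=0}^{\infty}\frac{y^{2n+1}}{4^n(n!)^2(2n+1)}=e^{y}\left(yI_0(y)+\frac{\pi y}{2}\big[I_0(y)\mathbf{L}_1(y)-I_1(y)\mathbf{L}_0(y)\big]\right).$$
   Context: For an integer $n\ge 0$ and complex $y$, $R_n(y)=e^y-1-\frac{y}{1!}-\frac{y^2}{2!}-\dots-\frac{y^n}{n!}=e^y-\sum_{k=0}^n\frac{y^k}{k!}$. $I_0(z)=\sum_{n\ge0}\frac{z^{2n}}{4^n(n!)^2}$ and $I_1=I_0'$ are the modified Bessel functions of the first kind; $\mathbf{L}_0,\mathbf{L}_1$ are the modified Struve functions of orders $0$ and $1$. *)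

From Stdlib Require Import Reals Factorial.
From Coquelicot Require Import Coquelicot.
Open Scope R_scope.

(* Sum of a complex series, via real and imaginary parts (meaningful when
   the series converges). *)
Definition csum (a : nat -> C) : C :=
  (Series (fun n => Re (a n)), Series (fun n => Im (a n))).

Definition cpow (y : C) (n : nat) : C := pow_n y n.

Definition cexp (y : C) : C :=
  csum (fun n => Cdiv (cpow y n) (RtoC (INR (Factorial.fact n)))).

Definition Rrem (n : nat) (y : C) : C :=
  Cminus (cexp y) (sum_n (fun k => Cdiv (cpow y k) (RtoC (INR (Factorial.fact k)))) n).

Definition I0 (z : C) : C :=
  csum (fun n => Cdiv (cpow z (2 * n)) (RtoC (4 ^ n * (INR (Factorial.fact n)) ^ 2))).

Definition I1 (z : C) : C :=
  csum (fun n => Cdiv (cpow z (2 * n + 1))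
                      (RtoC (2 ^ (2 * n + 1) * INR (Factorial.fact n) * INR (Factorial.fact (n + 1))))).

(* Gamma(k + 1/2) = (2k)! sqrt(pi) / (4^k k!) *)
Definition gamma_half (k : nat) : R :=
  INR (Factorial.fact (2 * k)) * sqrt PI / (4 ^ k * INR (Factorial.fact k)).

(* Modified Struve functions:
   L_nu(z) = sum_k (z/2)^(2k+nu+1) / (Gamma(k+3/2) Gamma(k+nu+3/2)) *)
Definition L0 (z : C) : C :=
  csum (fun k => Cdiv (cpow z (2 * k + 1))
                      (RtoC (2 ^ (2 * k + 1) * gamma_half (k + 1) * gamma_half (k + 1)))).

Definition L1 (z : C) : C :=
  csum (fun k => Cdiv (cpow z (2 * k + 2))
                      (RtoC (2 ^ (2 * k + 2) * gamma_half (k + 1) * gamma_half (k + 2)))).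

From Stdlib Require Import Reals Factorial Lia Lra Arith.
From Coquelicot Require Import Coquelicot.
Open Scope R_scope.

(* With A_k = sum_{n<k} alpha_n, where alpha_n = C(2n,n)/2^n, summation by parts turns
   sum_{n<=N} alpha_n R_n(y) into A_{N+1} R_N(y) + sum_{k<=N} A_k y^k/k!.  The boundary term
   vanishes because A_k <= 2^k while R_N(y) is bounded by the tail of the series of e^|y|.
   A Zeilberger certificate proves sum_j C(k,2j) C(2j,j)/4^j = alpha_k, and Pascal's rule then
   gives A_k = sum_j C(k,2j+1) C(2j,j)/4^j; since b_j = C(2j,j)/4^j * y^(2j+1)/(2j+1)!, this
   says that A_k y^k/k! is the k-th term of the Cauchy product of sum b with e^y.
   For the Bessel-Struve form, the coefficient of y^(2m+2) in I0 L1 - I1 L0 is a convolution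
   whose partial sums telescope to a closed form; it equals (2/pi)(b_(m+1) - i0_(m+1)), where
   i0_n is the coefficient of y^(2n) in I0, so that (pi/2) y (I0 L1 - I1 L0) = sum b - y I0. *)

(** * Complex series *)

Lemma Re_sum_n (a : nat -> C) n : Re (sum_n a n) = sum_n (fun k => Re (a k)) n.
Proof. induction n as [|n IH]; [now rewrite !sum_O|now rewrite !sum_Sn, <- IH]. Qed.

Lemma Im_sum_n (a : nat -> C) n : Im (sum_n a n) = sum_n (fun k => Im (a k)) n.
Proof. induction n as [|n IH]; [now rewrite !sum_O|now rewrite !sum_Sn, <- IH]. Qed.

Lemma is_lim_seq_C (u : nat -> C) (l : C) :
  filterlim u eventually (locally l) <->
  is_lim_seq (fun n => Re (u n)) (Re l) /\ is_lim_seq (fun n => Im (u n)) (Im l).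
Proof.
  rewrite filterlim_locally. split.
  - intros H. split; apply is_lim_seq_spec; intros eps;
      destruct (H eps) as [N HN]; exists N; intros n Hn; apply (HN n Hn).
  - intros [H1 H2] eps. apply is_lim_seq_spec in H1, H2.
    destruct (H1 eps) as [N1 HN1], (H2 eps) as [N2 HN2].
    exists (max N1 N2). intros n Hn. split; [apply HN1 | apply HN2]; lia.
Qed.

Lemma is_series_C (a : nat -> C) (l : C) :
  is_series a l <->
  is_series (fun n => Re (a n)) (Re l) /\ is_series (fun n => Im (a n)) (Im l).
Proof.
  assert (E : forall (b : nat -> R) m, is_series b m <-> is_lim_seq (sum_n b) m)
    by reflexivity.
  rewrite !E. unfold is_series. rewrite is_lim_seq_C.
  split; intros [H1 H2]; split; (eapply is_lim_seq_ext; [|eassumption]);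
    intros n; simpl; first [rewrite Re_sum_n | rewrite Im_sum_n
                            | rewrite <- Re_sum_n | rewrite <- Im_sum_n]; reflexivity.
Qed.

Lemma csum_unique (a : nat -> C) (l : C) : is_series a l -> csum a = l.
Proof.
  intros [H1 H2]%is_series_C. unfold csum.
  rewrite (is_series_unique _ _ H1), (is_series_unique _ _ H2). now destruct l.
Qed.

Lemma csum_ext (a b : nat -> C) : (forall n, a n = b n) -> csum a = csum b.
Proof. intros H. unfold csum. now rewrite (Series_ext _ _ (fun n => f_equal Re (H n))),
                                        (Series_ext _ _ (fun n => f_equal Im (H n))). Qed.

Lemma is_series_csum (a : nat -> C) : ex_series a -> is_series a (csum a).
Proof. intros [l Hl]. now rewrite (csum_unique _ _ Hl). Qed.

Lemma im_le_Cmod (c : C) : Rabs (Im c) <= Cmod c.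
Proof.
  destruct c as [x y]. unfold Cmod, Im. simpl.
  rewrite <- sqrt_Rsqr_abs. apply sqrt_le_1_alt. unfold Rsqr. nra.
Qed.

Lemma ex_series_C_Cmod (a : nat -> C) : ex_series (fun n => Cmod (a n)) -> ex_series a.
Proof. apply (@ex_series_le C_AbsRing C_CompleteNormedModule). intros n. apply Rle_refl. Qed.

Lemma ex_series_Cmod_le (a : nat -> C) (b : nat -> R) :
  (forall n, Cmod (a n) <= b n) -> ex_series b -> ex_series (fun n => Cmod (a n)).
Proof.
  intros Hle. apply (@ex_series_le R_AbsRing R_CompleteNormedModule).
  intros n. change (norm (Cmod (a n))) with (Rabs (Cmod (a n))).
  rewrite Rabs_pos_eq by apply Cmod_ge_0. apply Hle.
Qed.

Lemma ex_series_Rabs_Re (a : nat -> C) :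
  ex_series (fun n => Cmod (a n)) -> ex_series (fun n => Rabs (Re (a n))).
Proof.
  apply (@ex_series_le R_AbsRing R_CompleteNormedModule).
  intros n. apply (Rle_trans _ (Rabs (Re (a n)))); [|apply re_le_Cmod].
  rewrite <- (Rabs_Rabsolu (Re (a n))) at 2. apply Rle_refl.
Qed.

Lemma ex_series_Rabs_Im (a : nat -> C) :
  ex_series (fun n => Cmod (a n)) -> ex_series (fun n => Rabs (Im (a n))).
Proof.
  apply (@ex_series_le R_AbsRing R_CompleteNormedModule).
  intros n. apply (Rle_trans _ (Rabs (Im (a n)))); [|apply im_le_Cmod].
  rewrite <- (Rabs_Rabsolu (Im (a n))) at 2. apply Rle_refl.
Qed.

Lemma Rabs_Re_csum_le (a : nat -> C) :
  ex_series (fun n => Cmod (a n)) -> Rabs (Re (csum a)) <= Series (fun n => Cmod (a n)).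
Proof.
  intros Ha. eapply Rle_trans; [apply Series_Rabs, ex_series_Rabs_Re, Ha|].
  apply Series_le; [|exact Ha]. intros n. split; [apply Rabs_pos|apply re_le_Cmod].
Qed.

Lemma Rabs_Im_csum_le (a : nat -> C) :
  ex_series (fun n => Cmod (a n)) -> Rabs (Im (csum a)) <= Series (fun n => Cmod (a n)).
Proof.
  intros Ha. eapply Rle_trans; [apply Series_Rabs, ex_series_Rabs_Im, Ha|].
  apply Series_le; [|exact Ha]. intros n. split; [apply Rabs_pos|apply im_le_Cmod].
Qed.

Lemma is_series_C_mult (a b : nat -> C) (la lb : C) :
  is_series a la -> is_series b lb ->
  ex_series (fun n => Cmod (a n)) -> ex_series (fun n => Cmod (b n)) ->
  is_series (fun n => sum_n (fun k => Cmult (a k) (b (n - k)%nat)) n) (Cmult la lb).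
Proof.
  intros [Ha1 Ha2]%is_series_C [Hb1 Hb2]%is_series_C Aa Ab.
  pose proof (ex_series_Rabs_Re _ Aa) as Aa1. pose proof (ex_series_Rabs_Im _ Aa) as Aa2.
  pose proof (ex_series_Rabs_Re _ Ab) as Ab1. pose proof (ex_series_Rabs_Im _ Ab) as Ab2.
  apply is_series_C. split.
  - pose proof (is_series_minus _ _ _ _ (is_series_mult _ _ _ _ Ha1 Hb1 Aa1 Ab1)
                                        (is_series_mult _ _ _ _ Ha2 Hb2 Aa2 Ab2)) as P.
    eapply is_series_ext; [|exact P]. intros n.
    rewrite Re_sum_n, sum_n_Reals. change (plus ?x (opp ?y)) with (x - y).
    rewrite <- minus_sum. now apply sum_eq.
  - pose proof (is_series_plus _ _ _ _ (is_series_mult _ _ _ _ Ha1 Hb2 Aa1 Ab2)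
                                       (is_series_mult _ _ _ _ Ha2 Hb1 Aa2 Ab1)) as P.
    eapply is_series_ext; [|exact P]. intros n.
    rewrite Im_sum_n, sum_n_Reals. change (plus ?x ?y) with (x + y).
    rewrite <- plus_sum. now apply sum_eq.
Qed.

Lemma is_series_plus_vanishing {K : AbsRing} {V : NormedModule K} (a b X : nat -> V) (l : V) :
  (forall N, sum_n a N = plus (X N) (sum_n b N)) -> filterlim X eventually (locally (zero : V)) ->
  is_series b l -> is_series a l.
Proof.
  intros Hab HX Hb. unfold is_series.
  apply (filterlim_ext (fun N => plus (X N) (sum_n b N))); [intros N; now rewrite Hab|].
  rewrite <- (plus_zero_l l). eapply filterlim_comp_2; [exact HX|exact Hb|apply filterlim_plus].
Qed.

Lemma sum_n_by_parts (c A : nat -> R) (t : nat -> C) (L : C) N :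
  A 0%nat = 0 -> (forall n, A (S n) = A n + c n) ->
  sum_n (fun n => Cmult (RtoC (c n)) (Cminus L (sum_n t n))) N =
  Cplus (Cmult (RtoC (A (S N))) (Cminus L (sum_n t N))) (sum_n (fun k => Cmult (RtoC (A k)) (t k)) N).
Proof.
  intros HA0 HAS. induction N as [|N IH].
  - rewrite !sum_O, HAS, HA0, Rplus_0_l.
    change (@eq C (Cmult (RtoC (c 0%nat)) (Cminus L (t 0%nat)))
                  (Cplus (Cmult (RtoC (c 0%nat)) (Cminus L (t 0%nat))) (Cmult (RtoC 0) (t 0%nat)))).
    ring.
  - rewrite sum_Sn, IH, !sum_Sn, (HAS (S N)), RtoC_plus.
    change (@eq C
      (Cplus (Cplus (Cmult (RtoC (A (S N))) (Cminus L (sum_n t N)))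
                    (sum_n (fun k => Cmult (RtoC (A k)) (t k)) N))
             (Cmult (RtoC (c (S N))) (Cminus L (Cplus (sum_n t N) (t (S N))))))
      (Cplus (Cmult (Cplus (RtoC (A (S N))) (RtoC (c (S N)))) (Cminus L (Cplus (sum_n t N) (t (S N)))))
             (Cplus (sum_n (fun k => Cmult (RtoC (A k)) (t k)) N) (Cmult (RtoC (A (S N))) (t (S N)))))).
    ring.
Qed.

Lemma sum_f_R0_odd (d : nat -> R) n : (forall j, d (2 * j)%nat = 0) ->
  sum_f_R0 d (2 * n + 1) = sum_f_R0 (fun j => d (2 * j + 1)%nat) n.
Proof.
  intros Hz. induction n as [|n IH].
  - pose proof (Hz 0%nat) as H0. simpl in *. rewrite H0. ring.
  - replace (2 * S n + 1)%nat with (S (S (2 * n + 1))) by lia.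
    rewrite !tech5, IH. replace (S (2 * n + 1)) with (2 * S n)%nat by lia.
    rewrite Hz. replace (S (2 * S n)) with (2 * S n + 1)%nat by lia. ring.
Qed.

Lemma is_series_odd_R (c d : nat -> R) (l : R) :
  (forall j, d (2 * j)%nat = 0) -> (forall j, d (2 * j + 1)%nat = c j) ->
  is_series c l -> is_series d l.
Proof.
  intros Hz Ho Hc.
  assert (E : forall n, sum_n d (S n) = sum_n c (Nat.div2 n)).
  { intros n. rewrite !sum_n_Reals.
    destruct (Nat.Even_or_Odd n) as [[j ->]|[j ->]].
    - rewrite Nat.div2_double. replace (S (2 * j)) with (2 * j + 1)%nat by lia.
      rewrite sum_f_R0_odd by exact Hz. now apply sum_eq.
    - replace (2 * j + 1)%nat with (S (2 * j)) by lia. rewrite Nat.div2_succ_double.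
      rewrite tech5. replace (S (S (2 * j))) with (2 * S j)%nat by lia. rewrite Hz, Rplus_0_r.
      replace (S (2 * j)) with (2 * j + 1)%nat by lia.
      rewrite sum_f_R0_odd by exact Hz. now apply sum_eq. }
  assert (Hphi : filterlim (fun n => Nat.div2 (Nat.pred n)) eventually eventually).
  { intros P [N HN]. exists (2 * N + 1)%nat. intros n Hn. apply HN.
    apply Nat.div2_le_lower_bound. lia. }
  change (is_lim_seq (sum_n d) l).
  eapply is_lim_seq_ext_loc; [|exact (is_lim_seq_subseq (sum_n c) l _ Hphi Hc)].
  exists 1%nat. intros [|n] Hn; [lia|]. symmetry. apply E.
Qed.

Lemma is_series_odd_C (c d : nat -> C) (l : C) :
  (forall j, d (2 * j)%nat = RtoC 0) -> (forall j, d (2 * j + 1)%nat = c j) ->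
  is_series c l -> is_series d l.
Proof.
  intros Hz Ho [H1 H2]%is_series_C. apply is_series_C. split.
  - apply (is_series_odd_R (fun n => Re (c n))); [intros j; now rewrite Hz
                                                 | intros j; now rewrite Ho | exact H1].
  - apply (is_series_odd_R (fun n => Im (c n))); [intros j; now rewrite Hz
                                                 | intros j; now rewrite Ho | exact H2].
Qed.

Lemma ex_series_Cmod_odd (c d : nat -> C) :
  (forall j, d (2 * j)%nat = RtoC 0) -> (forall j, d (2 * j + 1)%nat = c j) ->
  ex_series (fun n => Cmod (c n)) -> ex_series (fun n => Cmod (d n)).
Proof.
  intros Hz Ho [l Hl]. exists l. apply (is_series_odd_R (fun n => Cmod (c n))); [| |exact Hl].
  - intros j. rewrite Hz. apply Cmod_0.
  - intros j. now rewrite Ho.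
Qed.

(** * Series of the form sum a_n y^(p n) *)

Definition pterm (a : nat -> R) (p : nat -> nat) (y : C) (n : nat) : C :=
  Cmult (RtoC (a n)) (cpow y (p n)).

Definition conv (a b : nat -> R) (m : nat) : R := sum_f_R0 (fun k => a k * b (m - k)%nat) m.

Lemma Cdiv_RtoC (z : C) (r : R) : r <> 0 -> Cdiv z (RtoC r) = Cmult (RtoC (/ r)) z.
Proof. intros H. rewrite RtoC_inv by exact H. unfold Cdiv. ring. Qed.

Lemma Cdiv_pterm (r : nat -> R) (p : nat -> nat) y n :
  r n <> 0 -> Cdiv (cpow y (p n)) (RtoC (r n)) = pterm (fun n => / r n) p y n.
Proof. apply Cdiv_RtoC. Qed.

Lemma Cmod_cpow (y : C) m : Cmod (cpow y m) = Cmod y ^ m.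
Proof.
  induction m as [|m IH]; [apply Cmod_1|].
  change (Cmod (Cmult y (cpow y m)) = Cmod y * Cmod y ^ m). now rewrite Cmod_mult, IH.
Qed.

Lemma cpow_add (y : C) m n : cpow y (m + n) = Cmult (cpow y m) (cpow y n).
Proof. unfold cpow. now rewrite pow_n_plus. Qed.

Lemma Cmod_pterm a p y n : Cmod (pterm a p y n) = Rabs (a n) * Cmod y ^ p n.
Proof. unfold pterm. now rewrite Cmod_mult, Cmod_R, Cmod_cpow. Qed.

Lemma sum_n_RtoC_mult (r : nat -> R) (z : C) m :
  sum_n (fun n => Cmult (RtoC (r n)) z) m = Cmult (RtoC (sum_f_R0 r m)) z.
Proof.
  induction m as [|m IH]; [now rewrite sum_O|].
  rewrite sum_Sn, IH. simpl sum_f_R0. rewrite RtoC_plus.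
  change (@eq C (Cplus (Cmult (RtoC (sum_f_R0 r m)) z) (Cmult (RtoC (r (S m))) z))
                (Cmult (Cplus (RtoC (sum_f_R0 r m)) (RtoC (r (S m)))) z)). ring.
Qed.

Lemma sum_n_pterm_mult (a b : nat -> R) (p q r : nat -> nat) y m :
  (forall k, (k <= m)%nat -> (p k + q (m - k))%nat = r m) ->
  sum_n (fun k => Cmult (pterm a p y k) (pterm b q y (m - k))) m = pterm (conv a b) r y m.
Proof.
  intros Hpq. unfold pterm, conv. rewrite <- sum_n_RtoC_mult.
  apply sum_n_ext_loc. intros k Hk. rewrite <- (Hpq k Hk), cpow_add, RtoC_mult.
  set (u := cpow y (p k)). set (v := cpow y (q (m - k)%nat)).
  change (@eq C (Cmult (Cmult (RtoC (a k)) u) (Cmult (RtoC (b (m - k)%nat)) v))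
                (Cmult (Cmult (RtoC (a k)) (RtoC (b (m - k)%nat))) (Cmult u v))).
  ring.
Qed.

Lemma ex_series_exp_terms (t : R) : ex_series (fun n => t ^ n / INR (fact n)).
Proof.
  exists (exp t). eapply is_series_ext; [|exact (is_exp_Reals t)]. intros n.
  simpl. rewrite pow_n_pow. change (scal ?x ?w) with (x * w). unfold Rdiv. ring.
Qed.

Lemma ex_series_Cmod_pterm (a : nat -> R) (p : nat -> nat) (d e : nat) (K A : R) y :
  (forall n, p n = (d * n + e)%nat) -> (forall n, Rabs (a n) <= K * A ^ n / INR (fact n)) ->
  ex_series (fun n => Cmod (pterm a p y n)).
Proof.
  intros Hp Ha.
  apply (ex_series_Cmod_le _ (fun n => (K * Cmod y ^ e) * ((A * Cmod y ^ d) ^ n / INR (fact n)))).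
  - intros n. rewrite Cmod_pterm, Hp, pow_add, pow_mult, Rpow_mult_distr.
    pose proof (Cmod_ge_0 y) as Hy. pose proof (INR_fact_lt_0 n).
    replace (K * Cmod y ^ e * (A ^ n * (Cmod y ^ d) ^ n / INR (fact n)))
      with ((K * A ^ n / INR (fact n)) * ((Cmod y ^ d) ^ n * Cmod y ^ e)) by (field; lra).
    apply Rmult_le_compat_r; [|apply Ha].
    apply Rmult_le_pos; apply pow_le; [apply pow_le|]; exact Hy.
  - apply (@ex_series_scal R_AbsRing R_NormedModule). apply ex_series_exp_terms.
Qed.

Lemma ex_series_Cmod_pterm_inv_fact (a : nat -> R) (p : nat -> nat) (d e : nat) y :
  (forall n, p n = (d * n + e)%nat) -> (forall n, Rabs (a n) <= / INR (fact n)) ->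
  ex_series (fun n => Cmod (pterm a p y n)).
Proof.
  intros Hp Ha. apply (ex_series_Cmod_pterm a p d e 1 1 y Hp).
  intros n. rewrite pow1. unfold Rdiv. rewrite !Rmult_1_l. apply Ha.
Qed.

Lemma is_series_pterm_mult (a b : nat -> R) (p q r : nat -> nat) y :
  ex_series (fun n => Cmod (pterm a p y n)) -> ex_series (fun n => Cmod (pterm b q y n)) ->
  (forall m k, (k <= m)%nat -> (p k + q (m - k))%nat = r m) ->
  is_series (pterm (conv a b) r y) (Cmult (csum (pterm a p y)) (csum (pterm b q y))).
Proof.
  intros Ha Hb Hpq.
  pose proof (is_series_C_mult _ _ _ _ (is_series_csum _ (ex_series_C_Cmod _ Ha))
                (is_series_csum _ (ex_series_C_Cmod _ Hb)) Ha Hb) as P.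
  eapply is_series_ext; [|exact P]. intros m. apply sum_n_pterm_mult, Hpq.
Qed.

Lemma is_lim_seq_0_Rabs_le (u v : nat -> R) :
  (forall n, Rabs (u n) <= v n) -> is_lim_seq v 0 -> is_lim_seq u 0.
Proof.
  intros Huv Hv. apply is_lim_seq_abs_0.
  apply (is_lim_seq_le_le (fun _ => 0) _ v); [|apply is_lim_seq_const|exact Hv].
  intros n. split; [apply Rabs_pos|apply Huv].
Qed.

Lemma is_lim_seq_exp_tail (t : R) :
  is_lim_seq (fun N => Series (fun j => t ^ (S N + j) / INR (fact (S N + j)))) 0.
Proof.
  set (h := fun k => t ^ k / INR (fact k)).
  assert (E : forall N, Series (fun j => h (S N + j)%nat) = Series h - sum_f_R0 h N).
  { intros N. rewrite (Series_incr_n h (S N)) by (lia || apply ex_series_exp_terms).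
    simpl Nat.pred. ring. }
  eapply is_lim_seq_ext; [intros N; symmetry; apply E|].
  replace (Finite 0) with (Rbar_minus (Series h) (Series h)) by (simpl; f_equal; ring).
  apply is_lim_seq_minus'; [apply is_lim_seq_const|].
  eapply is_lim_seq_ext; [|exact (Series_correct _ (ex_series_exp_terms t))].
  intros n. apply sum_n_Reals.
Qed.

Lemma pow2_mul_exp_tail_le (t : R) N : 0 <= t ->
  2 ^ S N * Series (fun j => t ^ (S N + j) / INR (fact (S N + j)))
  <= Series (fun j => (2 * t) ^ (S N + j) / INR (fact (S N + j))).
Proof.
  intros Ht. rewrite <- Series_scal_l. apply Series_le.
  - intros j. pose proof (INR_fact_lt_0 (S N + j)). pose proof (pow_le t (S N + j) Ht).
    pose proof (pow_lt 2 (S N) ltac:(lra)).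
    assert (2 ^ S N <= 2 ^ (S N + j)) by (apply Rle_pow; [lra|lia]).
    rewrite Rpow_mult_distr. unfold Rdiv.
    assert (0 <= t ^ (S N + j) * / INR (fact (S N + j)))
      by (apply Rmult_le_pos; [lra|left; apply Rinv_0_lt_compat; lra]).
    split; [apply Rmult_le_pos; lra|].
    rewrite Rmult_assoc. apply Rmult_le_compat_r; lra.
  - apply (ex_series_incr_n (fun k => (2 * t) ^ k / INR (fact k)) (S N)), ex_series_exp_terms.
Qed.

(** * Binomial sums *)

Lemma INR_fact_S n : INR (fact (S n)) = (INR n + 1) * INR (fact n).
Proof. change (fact (S n)) with (S n * fact n)%nat. now rewrite mult_INR, S_INR. Qed.

Lemma one_le_INR_fact n : 1 <= INR (fact n).
Proof. apply (le_INR 1), lt_O_fact. Qed.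

Lemma INR_fact_le a b : (a <= b)%nat -> INR (fact a) <= INR (fact b).
Proof. intros H. apply le_INR, fact_le, H. Qed.

Lemma INR_fact_mul_le a b : INR (fact a) * INR (fact b) <= INR (fact (a + b)).
Proof.
  rewrite <- mult_INR. apply le_INR. induction b as [|b IH].
  - rewrite Nat.add_0_r. simpl. lia.
  - replace (a + S b)%nat with (S (a + b)) by lia. simpl fact. nia.
Qed.

Lemma Rabs_inv_le_inv_fact (D : R) n : INR (fact n) <= D -> Rabs (/ D) <= / INR (fact n).
Proof.
  intros H. pose proof (INR_fact_lt_0 n).
  rewrite Rabs_pos_eq by (left; apply Rinv_0_lt_compat; lra). apply Rinv_le_contravar; lra.
Qed.

Lemma sum_f_R0_telescope (f : nat -> R) n : sum_f_R0 (fun j => f (S j) - f j) n = f (S n) - f 0%nat.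
Proof. induction n as [|n IH]; simpl; [ring|]. rewrite IH. ring. Qed.

Lemma sum_f_R0_last0 (f : nat -> R) n : f (S n) = 0 -> sum_f_R0 f (S n) = sum_f_R0 f n.
Proof. intros H. simpl. rewrite H. ring. Qed.

Lemma sum_f_R0_zero_beyond (d : nat -> R) k m : (k <= m)%nat ->
  (forall i, (k < i)%nat -> d i = 0) -> sum_f_R0 d m = sum_f_R0 d k.
Proof.
  intros Hkm Hz. induction m as [|m IH]; [now replace k with 0%nat by lia|].
  destruct (Nat.eq_dec k (S m)) as [->|E]; [reflexivity|].
  simpl. rewrite IH, Hz by lia. ring.
Qed.

(* Unlike [Binomial.C], this vanishes for [k > n], so binomial sums may run past [n]. *)
Definition binom (n k : nat) : R :=
  if Nat.leb k n then INR (fact n) / (INR (fact k) * INR (fact (n - k))) else 0.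

Lemma binom_out n k : (n < k)%nat -> binom n k = 0.
Proof. intros H. unfold binom. destruct (Nat.leb_spec k n); [lia|reflexivity]. Qed.

Lemma binom_in n k : (k <= n)%nat -> binom n k = INR (fact n) / (INR (fact k) * INR (fact (n - k))).
Proof. intros H. unfold binom. destruct (Nat.leb_spec k n); [reflexivity|lia]. Qed.

Lemma binom_n0 n : binom n 0 = 1.
Proof. rewrite binom_in, Nat.sub_0_r by lia. simpl. pose proof (INR_fact_lt_0 n). field. lra. Qed.

Lemma binom_pascal n k : binom (S n) (S k) = binom n k + binom n (S k).
Proof.
  destruct (lt_eq_lt_dec k n) as [[Hlt| ->]|Hgt].
  - rewrite !binom_in by lia.
    replace (S n - S k)%nat with (S (n - S k)) by lia.
    replace (n - k)%nat with (S (n - S k)) by lia.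
    rewrite !INR_fact_S, minus_INR, S_INR by lia.
    pose proof (INR_fact_lt_0 n). pose proof (INR_fact_lt_0 k). pose proof (INR_fact_lt_0 (n - S k)).
    assert (INR k + 1 <= INR n) by (rewrite <- S_INR; apply le_INR; lia).
    pose proof (pos_INR k). field. repeat split; lra.
  - rewrite (binom_out n (S n)), !binom_in, !Nat.sub_diag by lia. simpl (fact 0).
    pose proof (INR_fact_lt_0 n). pose proof (INR_fact_lt_0 (S n)). simpl (INR 1). field. lra.
  - rewrite !binom_out by lia. ring.
Qed.

Lemma binom_S_top n i : binom n i * (INR n + 1) = binom (S n) i * (INR n + 1 - INR i).
Proof.
  destruct (le_lt_dec i n) as [H|H].
  - rewrite !binom_in by lia. replace (S n - i)%nat with (S (n - i)) by lia.
    rewrite !INR_fact_S, minus_INR by lia.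
    pose proof (INR_fact_lt_0 n). pose proof (INR_fact_lt_0 i). pose proof (INR_fact_lt_0 (n - i)).
    assert (INR i <= INR n) by (apply le_INR; lia).
    field. repeat split; lra.
  - rewrite (binom_out n i) by lia. destruct (Nat.eq_dec i (S n)) as [ ->|E].
    + rewrite S_INR. ring.
    + rewrite binom_out by lia. ring.
Qed.

Lemma binom_add2 n i : binom n (i + 2) * ((INR i + 1) * (INR i + 2)) =
  binom n i * ((INR n - INR i) * (INR n - INR i - 1)).
Proof.
  destruct (le_lt_dec (i + 2) n) as [H|H].
  - rewrite !binom_in by lia.
    replace (n - i)%nat with (S (S (n - (i + 2)))) by lia.
    replace (i + 2)%nat with (S (S i)) by lia.
    rewrite !INR_fact_S, !S_INR.
    replace (INR (n - S (S i))) with (INR n - INR i - 2) by (rewrite minus_INR, !S_INR by lia; ring).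
    pose proof (INR_fact_lt_0 i). pose proof (INR_fact_lt_0 n). pose proof (INR_fact_lt_0 (n - S (S i))).
    pose proof (pos_INR i).
    assert (INR (i + 2) <= INR n) by (apply le_INR; lia). rewrite plus_INR in *. simpl (INR 2) in *.
    field. repeat split; lra.
  - rewrite (binom_out n (i + 2)) by lia.
    destruct (le_lt_dec i n) as [H2|H2].
    + assert (E : (n = i \/ n = i + 1)%nat) by lia. destruct E as [E|E]; subst n.
      * ring.
      * rewrite plus_INR. simpl (INR 1). ring.
    + rewrite binom_out by lia. ring.
Qed.

Definition central4 (j : nat) : R := INR (fact (2 * j)) / (4 ^ j * INR (fact j) ^ 2).

Lemma central4_pos j : 0 < central4 j.
Proof.
  unfold central4. pose proof (INR_fact_lt_0 j). pose proof (INR_fact_lt_0 (2 * j)).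
  pose proof (pow_lt 4 j ltac:(lra)).
  apply Rdiv_lt_0_compat; [lra|]. apply Rmult_lt_0_compat; [lra|apply pow_lt; lra].
Qed.

Lemma central4_S j : central4 (S j) * (2 * (INR j + 1)) = central4 j * (2 * INR j + 1).
Proof.
  unfold central4. replace (2 * S j)%nat with (S (S (2 * j))) by lia.
  rewrite !INR_fact_S, S_INR, mult_INR. simpl (INR 2). simpl pow.
  pose proof (INR_fact_lt_0 j). pose proof (INR_fact_lt_0 (2 * j)). pose proof (pos_INR j).
  pose proof (pow_lt 4 j ltac:(lra)). field. lra.
Qed.

Definition alpha (n : nat) : R := Binomial.C (2 * n) n / 2 ^ n.

Lemma alpha_0 : alpha 0 = 1.
Proof. unfold alpha, Binomial.C. simpl. field. Qed.

Lemma alpha_S n : (INR n + 1) * alpha (S n) = (2 * INR n + 1) * alpha n.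
Proof.
  unfold alpha, Binomial.C. replace (2 * S n - S n)%nat with (S n) by lia.
  replace (2 * n - n)%nat with n by lia. replace (2 * S n)%nat with (S (S (2 * n))) by lia.
  rewrite !INR_fact_S, S_INR, mult_INR. simpl (INR 2). simpl pow.
  pose proof (INR_fact_lt_0 n). pose proof (INR_fact_lt_0 (2 * n)). pose proof (pos_INR n).
  pose proof (pow_lt 2 n ltac:(lra)). field. lra.
Qed.

Lemma alpha_pos n : 0 < alpha n.
Proof.
  unfold alpha, Binomial.C. pose proof (INR_fact_lt_0 (2 * n)). pose proof (INR_fact_lt_0 n).
  pose proof (INR_fact_lt_0 (2 * n - n)). pose proof (pow_lt 2 n ltac:(lra)).
  apply Rdiv_lt_0_compat; [apply Rdiv_lt_0_compat|]; nra.
Qed.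

Lemma alpha_le_pow2 n : alpha n <= 2 ^ n.
Proof.
  induction n as [|n IH]; [rewrite alpha_0; simpl; lra|].
  pose proof (alpha_S n). pose proof (alpha_pos n). pose proof (alpha_pos (S n)).
  pose proof (pos_INR n). simpl pow. nra.
Qed.

Definition even_binom_sum (k : nat) : R := sum_f_R0 (fun j => binom k (2 * j) * central4 j) k.

(* Wilf-Zeilberger certificate: the recurrence of [even_binom_sum] telescopes termwise. *)
Definition wz_cert (k j : nat) : R :=
  - 4 * INR j ^ 2 * central4 j * binom (S k) (2 * j) / (INR k + 1).

Lemma wz_cert_spec k j :
  (INR k + 1) * (binom (S k) (2 * j) * central4 j) - (2 * INR k + 1) * (binom k (2 * j) * central4 j)
  = wz_cert k (S j) - wz_cert k j.
Proof.
  unfold wz_cert. replace (2 * S j)%nat with (2 * j + 2)%nat by lia.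
  pose proof (binom_S_top k (2 * j)) as R1. pose proof (binom_add2 (S k) (2 * j)) as R2.
  pose proof (central4_S j) as GS.
  rewrite mult_INR in R1, R2. change (INR 2) with 2 in *. rewrite !S_INR in *.
  pose proof (pos_INR k). pose proof (pos_INR j). pose proof (central4_pos j).
  set (b := binom (S k) (2 * j)) in *. set (b2 := binom (S k) (2 * j + 2)) in *.
  set (b0 := binom k (2 * j)) in *.
  assert (Hb0 : b0 = b * (INR k + 1 - 2 * INR j) / (INR k + 1)).
  { apply (Rmult_eq_reg_r (INR k + 1)); [|lra]. rewrite R1. field. lra. }
  assert (Hb2 : b2 = b * ((INR k + 1 - 2 * INR j) * (INR k + 1 - 2 * INR j - 1))
                       / ((2 * INR j + 1) * (2 * INR j + 2))).
  { apply (Rmult_eq_reg_r ((2 * INR j + 1) * (2 * INR j + 2))); [|nra]. rewrite R2. field. lra. }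
  assert (Hg : central4 (S j) = central4 j * (2 * INR j + 1) / (2 * (INR j + 1))).
  { apply (Rmult_eq_reg_r (2 * (INR j + 1))); [|lra]. rewrite GS. field. lra. }
  rewrite Hb0, Hb2, Hg. field. lra.
Qed.

Lemma even_binom_sum_S k :
  (INR k + 1) * even_binom_sum (S k) = (2 * INR k + 1) * even_binom_sum k.
Proof.
  unfold even_binom_sum.
  rewrite <- (sum_f_R0_last0 (fun j => binom k (2 * j) * central4 j) k)
    by (rewrite binom_out by lia; ring).
  apply Rminus_diag_uniq. rewrite !scal_sum, <- minus_sum.
  rewrite (sum_eq _ (fun j => wz_cert k (S j) - wz_cert k j))
    by (intros j _; rewrite <- wz_cert_spec; ring).
  rewrite sum_f_R0_telescope. unfold wz_cert. rewrite (binom_out (S k) (2 * S (S k))) by lia.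
  simpl (INR 0). pose proof (pos_INR k). field. lra.
Qed.

Lemma even_binom_sum_alpha k : even_binom_sum k = alpha k.
Proof.
  induction k as [|k IH].
  - unfold even_binom_sum, central4. simpl. rewrite binom_n0, alpha_0. field.
  - apply (Rmult_eq_reg_l (INR k + 1)); [|pose proof (pos_INR k); lra].
    now rewrite even_binom_sum_S, IH, alpha_S.
Qed.

Fixpoint alpha_sum (k : nat) : R := match k with O => 0 | S k => alpha_sum k + alpha k end.

Lemma alpha_sum_nonneg k : 0 <= alpha_sum k.
Proof. induction k; simpl; [lra|]. pose proof (alpha_pos k). lra. Qed.

Lemma alpha_sum_le_pow2 k : alpha_sum k <= 2 ^ k.
Proof. induction k as [|k IH]; simpl; [lra|]. pose proof (alpha_le_pow2 k). lra. Qed.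

Definition odd_binom_sum (k : nat) : R := sum_f_R0 (fun j => binom k (2 * j + 1) * central4 j) k.

Lemma odd_binom_sum_alpha_sum k : odd_binom_sum k = alpha_sum k.
Proof.
  induction k as [|k IH].
  - unfold odd_binom_sum. simpl. rewrite binom_out by lia. ring.
  - simpl alpha_sum. rewrite <- IH, <- even_binom_sum_alpha.
    unfold odd_binom_sum, even_binom_sum.
    rewrite (sum_eq _ (fun j => binom k (2 * j) * central4 j + binom k (2 * j + 1) * central4 j)).
    2:{ intros j _. replace (2 * j + 1)%nat with (S (2 * j)) by lia. rewrite binom_pascal. ring. }
    rewrite plus_sum, !sum_f_R0_last0 by (rewrite binom_out by lia; ring). ring.
Qed.

(** * The Bessel-Struve form *)

Definition i0_coef (n : nat) : R := / (4 ^ n * INR (fact n) ^ 2).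

Definition i1_coef (n : nat) : R := / (2 ^ (2 * n + 1) * INR (fact n) * INR (fact (n + 1))).

Definition l0_coef (k : nat) : R := / (2 ^ (2 * k + 1) * gamma_half (k + 1) * gamma_half (k + 1)).

Definition l1_coef (k : nat) : R := / (2 ^ (2 * k + 2) * gamma_half (k + 1) * gamma_half (k + 2)).

Definition b_coef (n : nat) : R := / (4 ^ n * INR (fact n) ^ 2 * INR (2 * n + 1)).

Lemma pow2_odd n : 2 ^ (2 * n + 1) = 2 * 4 ^ n.
Proof. rewrite pow_add, pow_mult. replace (2 ^ 2) with 4 by ring. ring. Qed.

Lemma pow2_even n : 2 ^ (2 * n + 2) = 4 * 4 ^ n.
Proof. rewrite pow_add, pow_mult. replace (2 ^ 2) with 4 by ring. ring. Qed.

Lemma gamma_half_pos k : 0 < gamma_half k.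
Proof.
  unfold gamma_half. pose proof (INR_fact_lt_0 (2 * k)). pose proof (INR_fact_lt_0 k).
  pose proof (sqrt_lt_R0 PI PI_RGT_0). pose proof (pow_lt 4 k ltac:(lra)).
  apply Rdiv_lt_0_compat; apply Rmult_lt_0_compat; lra.
Qed.

Lemma gamma_half_add1 k : gamma_half (k + 1) =
  INR (fact (2 * k)) * (2 * INR k + 1) * (2 * INR k + 2) * sqrt PI
  / (4 * 4 ^ k * (INR k + 1) * INR (fact k)).
Proof.
  unfold gamma_half.
  replace (2 * (k + 1))%nat with (S (S (2 * k))) by lia. replace (k + 1)%nat with (S k) by lia.
  rewrite !INR_fact_S, !S_INR, mult_INR. simpl (INR 2). simpl pow.
  pose proof (INR_fact_lt_0 k). pose proof (pos_INR k). pose proof (pow_lt 4 k ltac:(lra)).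
  field. lra.
Qed.

Lemma gamma_half_add2 k : gamma_half (k + 2) =
  INR (fact (2 * k)) * (2 * INR k + 1) * (2 * INR k + 2) * (2 * INR k + 3) * (2 * INR k + 4)
  * sqrt PI / (16 * 4 ^ k * (INR k + 1) * (INR k + 2) * INR (fact k)).
Proof.
  unfold gamma_half.
  replace (2 * (k + 2))%nat with (S (S (S (S (2 * k))))) by lia.
  replace (k + 2)%nat with (S (S k)) by lia.
  rewrite !INR_fact_S, !S_INR, mult_INR. simpl (INR 2). simpl pow.
  pose proof (INR_fact_lt_0 k). pose proof (pos_INR k). pose proof (pow_lt 4 k ltac:(lra)).
  field. lra.
Qed.

Lemma PI_sqrt_sqr : PI = sqrt PI * sqrt PI.
Proof. rewrite sqrt_sqrt; [reflexivity|]. pose proof PI_RGT_0. lra. Qed.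

Definition struve_partial_factor (k : nat) : R :=
  4 ^ k * INR (fact k) ^ 2 * (INR k + 1) /
  (INR (fact (2 * k)) ^ 2 * (2 * INR k + 1) * (2 * INR k + 2)).

(* Partial sums of the Cauchy-product coefficients of [I0 L1 - I1 L0] telescope:
   summing the coefficient of [y^(2(i+k)+2)] only over [n <= i] leaves this closed form. *)
Lemma struve_partial_conv i k :
  PI / 2 * sum_f_R0 (fun n => i0_coef n * l1_coef (i + k - n) - i1_coef n * l0_coef (i + k - n)) i
  = - 2 / (2 * (INR i + INR k) + 3) * (i1_coef i * struve_partial_factor k).
Proof.
  revert k. induction i as [|i IH]; intros k.
  - simpl sum_f_R0. rewrite Nat.sub_0_r.
    unfold i0_coef, i1_coef, l0_coef, l1_coef, struve_partial_factor.
    rewrite gamma_half_add1, gamma_half_add2, !pow2_odd, !pow2_even.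
    simpl (2 * 0 + 1)%nat. simpl (0 + 1)%nat. simpl (fact 0). simpl (fact 1). simpl (INR 0).
    simpl (INR 1). rewrite !pow_O.
    pose proof (INR_fact_lt_0 k). pose proof (INR_fact_lt_0 (2 * k)). pose proof (pos_INR k).
    pose proof (pow_lt 4 k ltac:(lra)). pose proof (sqrt_lt_R0 PI PI_RGT_0).
    pose proof PI_sqrt_sqr as HPI. set (s := sqrt PI) in *. clearbody s. rewrite HPI.
    field. lra.
  - rewrite tech5, Rmult_plus_distr_l.
    rewrite (sum_eq _ (fun n => i0_coef n * l1_coef (i + S k - n) - i1_coef n * l0_coef (i + S k - n)))
      by (intros n _; now replace (S i + k - n)%nat with (i + S k - n)%nat by lia).
    rewrite IH. replace (S i + k - S i)%nat with k by lia.
    unfold i0_coef, i1_coef, l0_coef, l1_coef, struve_partial_factor.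
    rewrite !gamma_half_add1, !gamma_half_add2, !pow2_odd, !pow2_even.
    replace (2 * S k)%nat with (S (S (2 * k))) by lia.
    replace (i + 1)%nat with (S i) by lia. replace (S i + 1)%nat with (S (S i)) by lia.
    rewrite !INR_fact_S, !S_INR, !mult_INR. simpl (INR 2). rewrite <- !tech_pow_Rmult.
    pose proof (INR_fact_lt_0 k). pose proof (INR_fact_lt_0 (2 * k)). pose proof (pos_INR k).
    pose proof (INR_fact_lt_0 i). pose proof (pos_INR i). pose proof (pow_lt 4 i ltac:(lra)).
    pose proof (pow_lt 4 k ltac:(lra)). pose proof (sqrt_lt_R0 PI PI_RGT_0).
    pose proof PI_sqrt_sqr as HPI. set (s := sqrt PI) in *. clearbody s. rewrite HPI.
    field. repeat split; lra.
Qed.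

Lemma struve_conv_coef m :
  PI / 2 * (conv i0_coef l1_coef m - conv i1_coef l0_coef m) = b_coef (S m) - i0_coef (S m).
Proof.
  unfold conv. rewrite <- minus_sum.
  pose proof (struve_partial_conv m 0) as H. rewrite Nat.add_0_r in H. rewrite H.
  unfold i1_coef, struve_partial_factor, b_coef, i0_coef. rewrite pow2_odd.
  replace (m + 1)%nat with (S m) by lia.
  replace (INR (2 * S m + 1)) with (2 * INR m + 3) by (rewrite plus_INR, mult_INR, !S_INR; simpl; ring).
  rewrite INR_fact_S. simpl (INR 0). simpl (2 * 0)%nat. simpl (fact 0). simpl (INR 1). simpl pow.
  pose proof (INR_fact_lt_0 m). pose proof (pos_INR m). pose proof (pow_lt 4 m ltac:(lra)).
  field. repeat split; lra.
Qed.

Lemma Rabs_i0_coef_le n : Rabs (i0_coef n) <= / INR (fact n).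
Proof.
  apply Rabs_inv_le_inv_fact. pose proof (one_le_INR_fact n).
  assert (1 <= 4 ^ n) by (apply pow_R1_Rle; lra).
  assert (INR (fact n) <= INR (fact n) ^ 2) by (simpl; nra). nra.
Qed.

Lemma Rabs_i1_coef_le n : Rabs (i1_coef n) <= / INR (fact n).
Proof.
  apply Rabs_inv_le_inv_fact. rewrite pow2_odd.
  pose proof (one_le_INR_fact n). pose proof (one_le_INR_fact (n + 1)).
  assert (1 <= 4 ^ n) by (apply pow_R1_Rle; lra).
  assert (1 <= 2 * 4 ^ n * INR (fact (n + 1))) by nra. nra.
Qed.

Lemma Rabs_b_coef_le n : Rabs (b_coef n) <= / INR (fact n).
Proof.
  apply Rabs_inv_le_inv_fact. pose proof (one_le_INR_fact n).
  assert (1 <= 4 ^ n) by (apply pow_R1_Rle; lra).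
  assert (1 <= INR (2 * n + 1)) by (apply (le_INR 1); lia).
  assert (1 <= 4 ^ n * INR (2 * n + 1)) by nra.
  assert (INR (fact n) <= INR (fact n) ^ 2) by (simpl; nra). nra.
Qed.

Lemma l0_coef_closed k :
  l0_coef k = 8 / PI * 4 ^ k * INR (fact (k + 1)) ^ 2 / INR (fact (2 * k + 2)) ^ 2.
Proof.
  unfold l0_coef, gamma_half. rewrite pow2_odd.
  replace (2 * (k + 1))%nat with (2 * k + 2)%nat by lia.
  replace (4 ^ (k + 1)) with (4 * 4 ^ k) by (rewrite pow_add; simpl; ring).
  pose proof (INR_fact_lt_0 (2 * k + 2)). pose proof (INR_fact_lt_0 (k + 1)).
  pose proof (sqrt_lt_R0 PI PI_RGT_0). pose proof (pow_lt 4 k ltac:(lra)).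
  pose proof PI_sqrt_sqr as HPI. set (s := sqrt PI) in *. clearbody s. rewrite HPI.
  field. repeat split; lra.
Qed.

Lemma l1_coef_closed k :
  l1_coef k = 16 / PI * 4 ^ k * INR (fact (k + 1)) * INR (fact (k + 2))
              / (INR (fact (2 * k + 2)) * INR (fact (2 * k + 4))).
Proof.
  unfold l1_coef, gamma_half. rewrite pow2_even.
  replace (2 * (k + 1))%nat with (2 * k + 2)%nat by lia.
  replace (2 * (k + 2))%nat with (2 * k + 4)%nat by lia.
  replace (4 ^ (k + 1)) with (4 * 4 ^ k) by (rewrite pow_add; simpl; ring).
  replace (4 ^ (k + 2)) with (16 * 4 ^ k) by (rewrite pow_add; simpl; ring).
  pose proof (INR_fact_lt_0 (2 * k + 2)). pose proof (INR_fact_lt_0 (k + 1)).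
  pose proof (INR_fact_lt_0 (2 * k + 4)). pose proof (INR_fact_lt_0 (k + 2)).
  pose proof (sqrt_lt_R0 PI PI_RGT_0). pose proof (pow_lt 4 k ltac:(lra)).
  pose proof PI_sqrt_sqr as HPI. set (s := sqrt PI) in *. clearbody s. rewrite HPI.
  field. repeat split; lra.
Qed.

Lemma Rabs_l0_coef_le k : Rabs (l0_coef k) <= 8 / PI * 4 ^ k / INR (fact k).
Proof.
  rewrite l0_coef_closed.
  pose proof (INR_fact_mul_le (k + 1) (k + 1)) as F1.
  replace (k + 1 + (k + 1))%nat with (2 * k + 2)%nat in F1 by lia.
  pose proof (INR_fact_le k (2 * k + 2) ltac:(lia)) as F2.
  pose proof (INR_fact_lt_0 (2 * k + 2)). pose proof (INR_fact_lt_0 (k + 1)).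
  pose proof (INR_fact_lt_0 k).
  assert (HK : 0 < 8 / PI * 4 ^ k)
    by (pose proof PI_RGT_0; pose proof (pow_lt 4 k ltac:(lra));
        apply Rmult_lt_0_compat; [apply Rdiv_lt_0_compat|]; lra).
  set (A := INR (fact (2 * k + 2))) in *. set (B := INR (fact (k + 1))) in *.
  set (F := INR (fact k)) in *. set (K := 8 / PI * 4 ^ k) in *.
  replace (K * B ^ 2 / A ^ 2) with (K * (B ^ 2 / A ^ 2)) by (field; lra).
  rewrite Rabs_pos_eq
    by (apply Rmult_le_pos; [lra|]; apply Rdiv_le_0_compat; [apply pow_le|apply pow_lt]; lra).
  unfold Rdiv at 2. apply Rmult_le_compat_l; [lra|].
  apply (Rmult_le_reg_r (A ^ 2 * F)); [apply Rmult_lt_0_compat; [apply pow_lt|]; lra|].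
  replace (B ^ 2 / A ^ 2 * (A ^ 2 * F)) with (B ^ 2 * F) by (field; lra).
  replace (/ F * (A ^ 2 * F)) with (A ^ 2) by (field; lra).
  simpl. nra.
Qed.

Lemma Rabs_l1_coef_le k : Rabs (l1_coef k) <= 16 / PI * 4 ^ k / INR (fact k).
Proof.
  rewrite l1_coef_closed.
  pose proof (INR_fact_mul_le (k + 1) (k + 2)) as F1.
  pose proof (INR_fact_le (k + 1 + (k + 2)) (2 * k + 4) ltac:(lia)) as F3.
  pose proof (INR_fact_le k (2 * k + 2) ltac:(lia)) as F2.
  pose proof (INR_fact_lt_0 (2 * k + 2)). pose proof (INR_fact_lt_0 (2 * k + 4)).
  pose proof (INR_fact_lt_0 (k + 1)). pose proof (INR_fact_lt_0 (k + 2)).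
  pose proof (INR_fact_lt_0 k).
  assert (HK : 0 < 16 / PI * 4 ^ k)
    by (pose proof PI_RGT_0; pose proof (pow_lt 4 k ltac:(lra));
        apply Rmult_lt_0_compat; [apply Rdiv_lt_0_compat|]; lra).
  set (A := INR (fact (2 * k + 2))) in *. set (A4 := INR (fact (2 * k + 4))) in *.
  set (B := INR (fact (k + 1))) in *. set (B2 := INR (fact (k + 2))) in *.
  set (F := INR (fact k)) in *. set (K := 16 / PI * 4 ^ k) in *.
  replace (K * B * B2 / (A * A4)) with (K * (B * B2 / (A * A4))) by (field; lra).
  rewrite Rabs_pos_eq by (apply Rmult_le_pos; [lra|]; apply Rdiv_le_0_compat; nra).
  unfold Rdiv at 2. apply Rmult_le_compat_l; [lra|].
  apply (Rmult_le_reg_r (A * A4 * F)); [apply Rmult_lt_0_compat; [apply Rmult_lt_0_compat|]; lra|].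
  replace (B * B2 / (A * A4) * (A * A4 * F)) with (B * B2 * F) by (field; lra).
  replace (/ F * (A * A4 * F)) with (A * A4) by (field; lra).
  rewrite (Rmult_comm A A4). apply Rmult_le_compat; [apply Rmult_le_pos| | |]; lra.
Qed.

Lemma I0_pterm y : I0 y = csum (pterm i0_coef (fun n => 2 * n)%nat y).
Proof.
  apply csum_ext. intros n.
  apply (Cdiv_pterm (fun n => 4 ^ n * INR (fact n) ^ 2) (fun n => 2 * n)%nat).
  pose proof (INR_fact_lt_0 n). pose proof (pow_lt 4 n ltac:(lra)).
  apply Rgt_not_eq, Rmult_lt_0_compat; [lra|apply pow_lt; lra].
Qed.

Lemma I1_pterm y : I1 y = csum (pterm i1_coef (fun n => 2 * n + 1)%nat y).
Proof.
  apply csum_ext. intros n.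
  apply (Cdiv_pterm (fun n => 2 ^ (2 * n + 1) * INR (fact n) * INR (fact (n + 1)))
                    (fun n => 2 * n + 1)%nat).
  pose proof (INR_fact_lt_0 n). pose proof (INR_fact_lt_0 (n + 1)).
  pose proof (pow_lt 2 (2 * n + 1) ltac:(lra)).
  apply Rgt_not_eq, Rmult_lt_0_compat; [apply Rmult_lt_0_compat|]; lra.
Qed.

Lemma L0_pterm y : L0 y = csum (pterm l0_coef (fun k => 2 * k + 1)%nat y).
Proof.
  apply csum_ext. intros k.
  apply (Cdiv_pterm (fun k => 2 ^ (2 * k + 1) * gamma_half (k + 1) * gamma_half (k + 1))
                    (fun k => 2 * k + 1)%nat).
  pose proof (gamma_half_pos (k + 1)). pose proof (pow_lt 2 (2 * k + 1) ltac:(lra)).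
  apply Rgt_not_eq, Rmult_lt_0_compat; [apply Rmult_lt_0_compat|]; lra.
Qed.

Lemma L1_pterm y : L1 y = csum (pterm l1_coef (fun k => 2 * k + 2)%nat y).
Proof.
  apply csum_ext. intros k.
  apply (Cdiv_pterm (fun k => 2 ^ (2 * k + 2) * gamma_half (k + 1) * gamma_half (k + 2))
                    (fun k => 2 * k + 2)%nat).
  pose proof (gamma_half_pos (k + 1)). pose proof (gamma_half_pos (k + 2)).
  pose proof (pow_lt 2 (2 * k + 2) ltac:(lra)).
  apply Rgt_not_eq, Rmult_lt_0_compat; [apply Rmult_lt_0_compat|]; lra.
Qed.

Lemma b_term_pterm y n :
  Cdiv (cpow y (2 * n + 1)) (RtoC (4 ^ n * INR (fact n) ^ 2 * INR (2 * n + 1)))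
  = pterm b_coef (fun n => 2 * n + 1)%nat y n.
Proof.
  apply (Cdiv_pterm (fun n => 4 ^ n * INR (fact n) ^ 2 * INR (2 * n + 1))
                    (fun n => 2 * n + 1)%nat).
  pose proof (INR_fact_lt_0 n). pose proof (pow_lt 4 n ltac:(lra)).
  assert (0 < INR (2 * n + 1)) by (apply lt_0_INR; lia).
  apply Rgt_not_eq, Rmult_lt_0_compat; [apply Rmult_lt_0_compat; [|apply pow_lt]|]; lra.
Qed.

Lemma ex_series_Cmod_i0 y : ex_series (fun n => Cmod (pterm i0_coef (fun n => 2 * n)%nat y n)).
Proof. apply (ex_series_Cmod_pterm_inv_fact _ _ 2 0); [lia|apply Rabs_i0_coef_le]. Qed.

Lemma ex_series_Cmod_b y : ex_series (fun n => Cmod (pterm b_coef (fun n => 2 * n + 1)%nat y n)).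
Proof. apply (ex_series_Cmod_pterm_inv_fact _ _ 2 1); [reflexivity|apply Rabs_b_coef_le]. Qed.

Lemma is_series_I0_L1 y :
  is_series (pterm (conv i0_coef l1_coef) (fun m => 2 * m + 2)%nat y) (Cmult (I0 y) (L1 y)).
Proof.
  rewrite I0_pterm, L1_pterm. apply is_series_pterm_mult; [| |intros; lia].
  - apply ex_series_Cmod_i0.
  - apply (ex_series_Cmod_pterm _ _ 2 2 (16 / PI) 4); [reflexivity|apply Rabs_l1_coef_le].
Qed.

Lemma is_series_I1_L0 y :
  is_series (pterm (conv i1_coef l0_coef) (fun m => 2 * m + 2)%nat y) (Cmult (I1 y) (L0 y)).
Proof.
  rewrite I1_pterm, L0_pterm. apply is_series_pterm_mult; [| |intros; lia].
  - apply (ex_series_Cmod_pterm_inv_fact _ _ 2 1); [reflexivity|apply Rabs_i1_coef_le].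
  - apply (ex_series_Cmod_pterm _ _ 2 1 (8 / PI) 4); [reflexivity|apply Rabs_l0_coef_le].
Qed.

Lemma is_series_b_minus_y_I0 y :
  is_series (fun m => Cminus (pterm b_coef (fun n => 2 * n + 1)%nat y (S m))
                             (Cmult y (pterm i0_coef (fun n => 2 * n)%nat y (S m))))
            (Cminus (csum (pterm b_coef (fun n => 2 * n + 1)%nat y)) (Cmult y (I0 y))).
Proof.
  rewrite I0_pterm.
  pose proof (is_series_csum _ (ex_series_C_Cmod _ (ex_series_Cmod_b y))) as Sb.
  pose proof (is_series_csum _ (ex_series_C_Cmod _ (ex_series_Cmod_i0 y))) as S0.
  pose proof (is_series_minus _ _ _ _ Sb (@is_series_scal C_AbsRing C_NormedModule y _ _ S0)) as D.
  apply (is_series_incr_1 (fun n => Cminus (pterm b_coef (fun n => 2 * n + 1)%nat y n)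
                                           (Cmult y (pterm i0_coef (fun n => 2 * n)%nat y n)))).
  assert (E0 : Cminus (pterm b_coef (fun n => 2 * n + 1)%nat y 0)
                      (Cmult y (pterm i0_coef (fun n => 2 * n)%nat y 0)) = RtoC 0).
  { unfold pterm, b_coef, i0_coef. simpl. rewrite !Rmult_1_l, Rinv_1.
    change (@eq C (Cminus (Cmult (RtoC 1) (Cmult y 1)) (Cmult y (Cmult (RtoC 1) 1))) (RtoC 0)).
    ring. }
  rewrite E0. change (plus ?l (RtoC 0)) with (plus l zero). rewrite plus_zero_r. exact D.
Qed.

Lemma struve_series_term y m :
  Cmult (Cmult (RtoC (PI / 2)) y)
    (Cminus (pterm (conv i0_coef l1_coef) (fun m => 2 * m + 2)%nat y m)
            (pterm (conv i1_coef l0_coef) (fun m => 2 * m + 2)%nat y m))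
  = Cminus (pterm b_coef (fun n => 2 * n + 1)%nat y (S m))
           (Cmult y (pterm i0_coef (fun n => 2 * n)%nat y (S m))).
Proof.
  unfold pterm.
  replace (2 * S m + 1)%nat with (S (2 * m + 2)) by lia.
  replace (2 * S m)%nat with (2 * m + 2)%nat by lia.
  change (cpow y (S (2 * m + 2))) with (Cmult y (cpow y (2 * m + 2))).
  replace (b_coef (S m))
    with (PI / 2 * (conv i0_coef l1_coef m - conv i1_coef l0_coef m) + i0_coef (S m))
    by (rewrite struve_conv_coef; ring).
  rewrite RtoC_plus, RtoC_mult, RtoC_minus.
  set (z := cpow y (2 * m + 2)).
  change (@eq C
    (Cmult (Cmult (RtoC (PI / 2)) y) (Cminus (Cmult (RtoC (conv i0_coef l1_coef m)) z)
                                             (Cmult (RtoC (conv i1_coef l0_coef m)) z)))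
    (Cminus (Cmult (Cplus (Cmult (RtoC (PI / 2)) (Cminus (RtoC (conv i0_coef l1_coef m))
                                                         (RtoC (conv i1_coef l0_coef m))))
                          (RtoC (i0_coef (S m)))) (Cmult y z))
            (Cmult y (Cmult (RtoC (i0_coef (S m))) z)))).
  ring.
Qed.

Lemma csum_b_bessel_struve y :
  csum (pterm b_coef (fun n => 2 * n + 1)%nat y) =
  Cplus (Cmult y (I0 y))
        (Cmult (Cmult (RtoC (PI / 2)) y) (Cminus (Cmult (I0 y) (L1 y)) (Cmult (I1 y) (L0 y)))).
Proof.
  pose proof (@is_series_scal C_AbsRing C_NormedModule (Cmult (RtoC (PI / 2)) y) _ _
                (is_series_minus _ _ _ _ (is_series_I0_L1 y) (is_series_I1_L0 y))) as Q.
  assert (E : Cminus (csum (pterm b_coef (fun n => 2 * n + 1)%nat y)) (Cmult y (I0 y)) =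
              Cmult (Cmult (RtoC (PI / 2)) y)
                    (Cminus (Cmult (I0 y) (L1 y)) (Cmult (I1 y) (L0 y)))).
  { rewrite <- (csum_unique _ _ (is_series_b_minus_y_I0 y)),
            <- (csum_ext _ _ (struve_series_term y)).
    exact (csum_unique _ _ Q). }
  rewrite <- E. ring.
Qed.

(** * Summing the remainders *)

Definition inv_fact (k : nat) : R := / INR (fact k).

Lemma exp_term_pterm y k :
  Cdiv (cpow y k) (RtoC (INR (fact k))) = pterm inv_fact (fun k => k) y k.
Proof. apply (Cdiv_RtoC _ (INR (fact k))), INR_fact_neq_0. Qed.

Lemma Rabs_inv_fact k : Rabs (inv_fact k) = / INR (fact k).
Proof. apply Rabs_pos_eq. left. apply Rinv_0_lt_compat, INR_fact_lt_0. Qed.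

Lemma ex_series_Cmod_exp y : ex_series (fun n => Cmod (pterm inv_fact (fun k => k) y n)).
Proof.
  apply (ex_series_Cmod_pterm_inv_fact _ _ 1 0); [intros; lia|].
  intros n. rewrite Rabs_inv_fact. apply Rle_refl.
Qed.

Lemma cexp_pterm y : cexp y = csum (pterm inv_fact (fun k => k) y).
Proof. apply csum_ext, exp_term_pterm. Qed.

(* The series [b] as a power series in [y], with vanishing even coefficients. *)
Definition odd_coef (i : nat) : R :=
  if Nat.even i then 0 else central4 (Nat.div2 i) / INR (fact i).

Lemma even_double j : Nat.even (2 * j) = true.
Proof. rewrite Nat.even_mul. reflexivity. Qed.

Lemma even_double1 j : Nat.even (2 * j + 1) = false.
Proof. rewrite Nat.even_add, even_double. reflexivity. Qed.

Lemma div2_double1 j : Nat.div2 (2 * j + 1) = j.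
Proof. rewrite Nat.div2_odd'. reflexivity. Qed.

Lemma odd_coef_double j : odd_coef (2 * j) = 0.
Proof. unfold odd_coef. now rewrite even_double. Qed.

Lemma odd_coef_double1 j : odd_coef (2 * j + 1) = b_coef j.
Proof.
  unfold odd_coef, b_coef, central4. rewrite even_double1, div2_double1.
  replace (2 * j + 1)%nat with (S (2 * j)) by lia. rewrite INR_fact_S, S_INR.
  pose proof (INR_fact_lt_0 j). pose proof (INR_fact_lt_0 (2 * j)). pose proof (pos_INR (2 * j)).
  pose proof (pow_lt 4 j ltac:(lra)). field. repeat split; try lra; apply pow_nonzero; lra.
Qed.

Lemma conv_odd_coef_inv_fact k : conv odd_coef inv_fact k = alpha_sum k / INR (fact k).
Proof.
  rewrite <- odd_binom_sum_alpha_sum. unfold conv, inv_fact. pose proof (INR_fact_lt_0 k).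
  rewrite (sum_eq _ (fun i => odd_coef i * INR (fact i) * binom k i / INR (fact k))).
  2:{ intros i Hi. rewrite binom_in by lia.
      pose proof (INR_fact_lt_0 i). pose proof (INR_fact_lt_0 (k - i)). field. lra. }
  unfold Rdiv at 1. rewrite <- scal_sum, Rmult_comm. unfold Rdiv. f_equal.
  rewrite <- (sum_f_R0_zero_beyond (fun i => odd_coef i * INR (fact i) * binom k i) k (2 * k + 1))
    by (try lia; intros i Hi; rewrite binom_out by lia; ring).
  rewrite sum_f_R0_odd by (intros j; rewrite odd_coef_double; ring).
  apply sum_eq. intros j _. unfold odd_coef. rewrite even_double1, div2_double1.
  pose proof (INR_fact_lt_0 (2 * j + 1)). field. lra.
Qed.

Lemma is_series_odd_coef y :
  ex_series (fun n => Cmod (pterm odd_coef (fun k => k) y n)) /\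
  is_series (pterm odd_coef (fun k => k) y) (csum (pterm b_coef (fun n => 2 * n + 1)%nat y)).
Proof.
  assert (Hz : forall j, pterm odd_coef (fun k => k) y (2 * j) = RtoC 0).
  { intros j. unfold pterm. rewrite odd_coef_double.
    change (@eq C (Cmult (RtoC 0) (cpow y (2 * j))) (RtoC 0)). ring. }
  assert (Ho : forall j, pterm odd_coef (fun k => k) y (2 * j + 1)
                         = pterm b_coef (fun n => 2 * n + 1)%nat y j).
  { intros j. unfold pterm. now rewrite odd_coef_double1. }
  split.
  - exact (ex_series_Cmod_odd _ _ Hz Ho (ex_series_Cmod_b y)).
  - exact (is_series_odd_C _ _ _ Hz Ho (is_series_csum _ (ex_series_C_Cmod _ (ex_series_Cmod_b y)))).
Qed.

Lemma is_series_alpha_sum_exp y :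
  is_series (pterm (fun k => alpha_sum k / INR (fact k)) (fun k => k) y)
            (Cmult (cexp y) (csum (pterm b_coef (fun n => 2 * n + 1)%nat y))).
Proof.
  destruct (is_series_odd_coef y) as [Ho So].
  pose proof (is_series_pterm_mult odd_coef inv_fact (fun k => k) (fun k => k) (fun k => k) y
                Ho (ex_series_Cmod_exp y) ltac:(intros; cbv beta; lia)) as P.
  rewrite (csum_unique _ _ So), <- cexp_pterm, Cmult_comm in P.
  eapply is_series_ext; [|exact P]. intros k. unfold pterm. now rewrite conv_odd_coef_inv_fact.
Qed.

Lemma is_series_Rrem y N : is_series (fun j => pterm inv_fact (fun k => k) y (S N + j)) (Rrem N y).
Proof.
  apply is_series_incr_n; [lia|]. simpl Nat.pred.
  match goal with |- is_series _ ?L => replace L with (cexp y) end.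
  - rewrite cexp_pterm. apply is_series_csum, ex_series_C_Cmod, ex_series_Cmod_exp.
  - unfold Rrem. rewrite (sum_n_ext _ _ N (exp_term_pterm y)).
    change (@eq C (cexp y) (Cplus (Cminus (cexp y) (sum_n (pterm inv_fact (fun k => k) y) N))
                                  (sum_n (pterm inv_fact (fun k => k) y) N))). ring.
Qed.

Lemma Rabs_Re_Im_Rrem_le y N :
  let T := Series (fun j => Cmod y ^ (S N + j) / INR (fact (S N + j))) in
  Rabs (Re (Rrem N y)) <= T /\ Rabs (Im (Rrem N y)) <= T.
Proof.
  intros T.
  assert (HC : forall j, Cmod (pterm inv_fact (fun k => k) y (S N + j))
                         = Cmod y ^ (S N + j) / INR (fact (S N + j))).
  { intros j. rewrite Cmod_pterm, Rabs_inv_fact. unfold Rdiv. apply Rmult_comm. }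
  assert (A : ex_series (fun j => Cmod (pterm inv_fact (fun k => k) y (S N + j))))
    by apply (ex_series_incr_n (fun k => Cmod (pterm inv_fact (fun k => k) y k)) (S N)),
             ex_series_Cmod_exp.
  unfold T. rewrite <- (Series_ext _ _ HC), <- (csum_unique _ _ (is_series_Rrem y N)).
  split; [apply Rabs_Re_csum_le, A | apply Rabs_Im_csum_le, A].
Qed.

(* [alpha_sum (S N) <= 2^(S N)] is what keeps the boundary term of the summation by parts
   below the tail of the exponential series at [2 |y|]. *)
Lemma alpha_sum_Rrem_vanishes y :
  filterlim (fun N => Cmult (RtoC (alpha_sum (S N))) (Rrem N y)) eventually (locally (zero : C)).
Proof.
  apply is_lim_seq_C.
  assert (Hb : forall N (f : C -> R),
             Rabs (f (Rrem N y)) <= Series (fun j => Cmod y ^ (S N + j) / INR (fact (S N + j))) ->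
             Rabs (alpha_sum (S N) * f (Rrem N y))
             <= Series (fun j => (2 * Cmod y) ^ (S N + j) / INR (fact (S N + j)))).
  { intros N f Hf. pose proof (alpha_sum_nonneg (S N)). pose proof (alpha_sum_le_pow2 (S N)).
    eapply Rle_trans; [|apply pow2_mul_exp_tail_le, Cmod_ge_0].
    rewrite Rabs_mult, Rabs_pos_eq by lra.
    apply Rmult_le_compat; [lra|apply Rabs_pos|lra|exact Hf]. }
  split; apply (is_lim_seq_0_Rabs_le _ (fun N => Series (fun j => (2 * Cmod y) ^ (S N + j)
                                                                / INR (fact (S N + j)))));
    try apply is_lim_seq_exp_tail; intros N; destruct (Rabs_Re_Im_Rrem_le y N) as [HRe HIm].
  - replace (Re (Cmult (RtoC (alpha_sum (S N))) (Rrem N y)))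
      with (alpha_sum (S N) * Re (Rrem N y)) by (simpl; ring).
    exact (Hb N Re HRe).
  - replace (Im (Cmult (RtoC (alpha_sum (S N))) (Rrem N y)))
      with (alpha_sum (S N) * Im (Rrem N y)) by (simpl; ring).
    exact (Hb N Im HIm).
Qed.

Lemma is_series_alpha_Rrem y :
  is_series (fun n => Cmult (RtoC (alpha n)) (Rrem n y))
            (Cmult (cexp y) (csum (pterm b_coef (fun n => 2 * n + 1)%nat y))).
Proof.
  apply (is_series_plus_vanishing _ _ _ _
           (fun N => sum_n_by_parts alpha alpha_sum _ (cexp y) N eq_refl (fun n => eq_refl))).
  { apply alpha_sum_Rrem_vanishes. }
  eapply is_series_ext; [|apply is_series_alpha_sum_exp]. intros k.
  rewrite exp_term_pterm. unfold pterm, inv_fact, Rdiv. rewrite RtoC_mult.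
  change (@eq C (Cmult (Cmult (RtoC (alpha_sum k)) (RtoC (/ INR (fact k)))) (cpow y k))
                (Cmult (RtoC (alpha_sum k)) (Cmult (RtoC (/ INR (fact k))) (cpow y k)))).
  ring.
Qed.

Theorem mainTheorem14 (y : C) :
  let b := fun n : nat =>
    Cdiv (cpow y (2 * n + 1))
         (RtoC (4 ^ n * (INR (Factorial.fact n)) ^ 2 * INR (2 * n + 1))) in
  ex_series b /\
  is_series (fun n : nat =>
      Cmult (RtoC (Binomial.C (2 * n) n / 2 ^ n)) (Rrem n y))
    (Cmult (cexp y) (csum b)) /\
  Cmult (cexp y) (csum b) =
  Cmult (cexp y)
    (Cplus (Cmult y (I0 y))
           (Cmult (Cmult (RtoC (PI / 2)) y)
                  (Cminus (Cmult (I0 y) (L1 y)) (Cmult (I1 y) (L0 y))))).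
Proof.
  intros b. unfold b. rewrite (csum_ext _ _ (b_term_pterm y)). split; [|split].
  - apply (ex_series_ext _ _ (fun n => eq_sym (b_term_pterm y n))).
    apply ex_series_C_Cmod, ex_series_Cmod_b.
  - exact (is_series_alpha_Rrem y).
  - now rewrite csum_b_bessel_struve.
Qed.
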